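(* Let $X=X_1\times\cdots\times X_n$ be finite, $S=\{1,\ldots,n\}$, and let $\varrho(\mathcal{C})\ge 0$ be given for every partition $\mathcal{C}$ of $S$. Then the recombination equation \[ \dot\omega_t=\sum_{\mathcal{A}\in\boldsymbol{P}(S)}\varrho(\mathcal{A})\big(\mathcal{R}_{\mathcal{A}}(\omega_t)-\omega_t\big) \] for a differentiable curve $(\omega_t)_{t\ge0}$ of probability measures on $X$ is the law of mass action of the chemical reaction network consisting of the reactions \[ \sum_{j=1}^{|\mathcal{C}|} x^{(j)} \xrightarrow{\ \varrho(\mathcal{C})/|\mathcal{C}|\ } \sum_{j=1}^{|\mathcal{C}|}\ \bigsqcup_{i=1}^{|\mathcal{C}|}\pi_{C_i}\big(x^{(i+j-1)}\big), \] one for every $\mathcal{C}=\{C_1,\ldots,C_{|\mathcal{C}|}\}\in\boldsymbol{P}(S)$ and every ordered tuple $(x^{(1)},\ldots,x^{(|\mathcal{C}|)})\in X^{|\mathcal{C}|}$ (indices read modulo $|\mathcal{C}|$). That is, the recombination equation is equivalent to \[ \dot{\omega}_t = \sum_{\mathcal{C} \in \boldsymbol{P}(S)} \sum_{x^{(1)},\ldots,x^{(|\mathcal{C}|)} \in X} \frac{\varrho(\mathcal{C})}{|\mathcal{C}|} \, \omega_t \big (x^{(1)} \big) \cdots \omega_t \big (x^{(|\mathcal{C}|)} \big) \sum_{j = 1}^{|\mathcal{C}|} \Big ( \bigsqcup_{i = 1}^{|\mathcal{C}|} \pi_{C_i} \big (x^{(i + j -1)} \big) - x^{(j)} \Big ).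 \]
   Context: $\boldsymbol{P}(S)$ is the set of partitions of $S$; blocks of a partition $\mathcal{C}$ are enumerated so that $C_1$ contains $1$ and, for $k\ge 2$, $C_k$ contains the smallest element not in $C_1\cup\cdots\cup C_{k-1}$. For $A\subseteq S$, $\pi_A:X\to\prod_{i\in A}X_i$ is the coordinate projection; for pairwise disjoint $U_1,\ldots,U_k$ and sequences $y^{(\ell)}$ indexed by $U_\ell$, $y^{(1)}\sqcup\cdots\sqcup y^{(k)}$ is the sequence indexed by $\bigcup U_\ell$ with entry $y^{(j)}_i$ at site $i\in U_j$. The recombinator is $\mathcal{R}_{\mathcal{A}}(\nu)=\bigotimes_{i=1}^{|\mathcal{A}|}\pi_{A_i}.\nu$ (product of push-forward marginals). Measures on the finite set $X$ are identified with vectors in $\mathbb{R}^X$, and each $x\in X$ with the point mass $\delta_x$ (basis vector); so sums of elements of $X$ are sums of vectors. A chemical reaction network on a finite species set $\mathcal{S}$ is a finite collection of reactions $r_1+\cdots+r_m\xrightarrow{\kappa}s_1+\cdots+s_m$ with $r_i,s_i\in\mathcal{S}$ and $\kappa\ge0$; its law of mass action is the ODE $\dot c_t=\sum \kappa\, c_t(r_1)\cdots c_t(r_m)\,(s_1+\cdots+s_m-r_1-\cdots-r_m)$, summed over all reactions, for the concentration vector $c_t\in\mathbb{R}^{\mathcal{S}}$. *)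

From HB Require Import structures.
From mathcomp Require Import all_boot all_order all_algebra.
From mathcomp Require Import all_classical all_reals all_analysis.
Set Implicit Arguments. Unset Strict Implicit. Unset Printing Implicit Defensive.
Import Order.TTheory GRing.Theory Num.Theory.
Local Open Scope ring_scope.

Section Recomb.
Variables (n : nat) (Xs : 'I_n -> finType).

(* X = X_1 x ... x X_n (sites 1..n are represented by 'I_n, i.e. 0..n-1). *)
Definition Xspace : finType := {dffun forall i : 'I_n, Xs i}.

Definition is_partition (C : {set {set 'I_n}}) : bool := finset.partition C [set: 'I_n].

(* Canonical enumeration C_1, C_2, ... of the blocks: ordered by their
   smallest element (C_1 contains the first site, C_k contains the smallest
   site not in C_1 u ... u C_{k-1}). *)
Definition blocks (C : {set {set 'I_n}}) : seq {set 'I_n} :=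
  [seq finset.pblock C i | i <- enum 'I_n & [forall j in finset.pblock C i, (i <= j)%N]].

(* 0-based index of the block containing site s *)
Definition bidx (C : {set {set 'I_n}}) (s : 'I_n) : nat := index (finset.pblock C s) (blocks C).

Definition nblocks (C : {set {set 'I_n}}) : nat := size (blocks C).

Lemma cyc_proof k (j : 'I_k) (m : nat) : ((m + j) %% k < k)%N.
Proof. by apply: ltn_pmod; apply: leq_ltn_trans (ltn_ord j). Qed.
Definition cyc k (j : 'I_k) (m : nat) : 'I_k := Ordinal (cyc_proof j m).

Variable R : realType.

Definition dirac_vec (y : Xspace) : Xspace -> R := fun z => (z == y)%:R.

(* recombinator: R_A(nu)(z) = prod_i (pi_{A_i}.nu)(pi_{A_i} z) *)
Definition marginal_at (A : {set 'I_n}) (nu : Xspace -> R) (z : Xspace) : R :=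
  \sum_(w : Xspace | [forall s in A, w s == z s]) nu w.
Definition recombinator (A : {set {set 'I_n}}) (nu : Xspace -> R) : Xspace -> R :=
  fun z => \prod_(B <- blocks A) marginal_at B nu z.

Definition recomb_field (rho : {set {set 'I_n}} -> R) (om : Xspace -> R)
    : Xspace -> R :=
  fun z => \sum_(A : {set {set 'I_n}} | is_partition A)
             rho A * (recombinator A om z - om z).

(* the product state  |_|_{i} pi_{C_i}(x^{(i+j-1)})  (0-based: index i+j mod k) *)
Definition recomb_point (C : {set {set 'I_n}}) (k : nat) (xs : {ffun 'I_k -> Xspace})
    (j : 'I_k) : Xspace :=
  [ffun s : 'I_n => xs (cyc j (bidx C s)) s].

Definition mass_action_field (rho : {set {set 'I_n}} -> R) (om : Xspace -> R)
    : Xspace -> R :=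
  fun z => \sum_(C : {set {set 'I_n}} | is_partition C)
    \sum_(xs : {ffun 'I_(nblocks C) -> Xspace})
      (rho C / (nblocks C)%:R) * (\prod_(i < nblocks C) om (xs i)) *
      \sum_(j < nblocks C)
        (dirac_vec (recomb_point C xs j) z - dirac_vec (xs j) z).

Definition is_prob (om : Xspace -> R) : Prop :=
  (forall z, 0 <= om z) /\ \sum_z om z = 1.

End Recomb.

From HB Require Import structures.
From mathcomp Require Import all_boot all_order all_algebra.
From mathcomp Require Import all_classical all_reals all_analysis.
Import Order.TTheory GRing.Theory Num.Theory.
Local Open Scope ring_scope.
Set Implicit Arguments. Unset Strict Implicit. Unset Printing Implicit Defensive.

(* Under the product measure
   om^k on tuples (x^(1), ..., x^(k)), the point mass at the recombined point
   |_|_i pi_{C_i}(x^(i+j-1)) has expectation prod_i (pi_{C_i}.om), i.e. R_C(om),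
   because the cyclic shift makes each block read a different coordinate; the
   point mass at x^(j) has expectation om, because om has total mass one.
   Summing over the k shifts cancels the rate factor 1/k, so the mass-action
   field coincides with the recombination field term by term. *)

Section Blocks.
Variables (n : nat) (C : {set {set 'I_n}}).
Hypothesis partC : is_partition C.

Lemma mem_cover_partition s : s \in finset.cover C.
Proof. by case/and3P: partC => /eqP -> _ _; rewrite inE. Qed.

Lemma trivIset_partition : finset.trivIset C.
Proof. by case/and3P: partC. Qed.

Lemma mem_blockE B s : B \in blocks C -> (s \in B) = (finset.pblock C s == B).
Proof.
case/mapP => i _ ->.
by rewrite eq_sym eq_pblock ?mem_cover_partition ?trivIset_partition.
Qed.

Lemma pblock_in_blocks s : finset.pblock C s \in blocks C.
Proof.
have s_pblock : s \in finset.pblock C s by rewrite mem_pblock mem_cover_partition.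
case: (arg_minnP (fun i : 'I_n => val i) s_pblock) => i i_pblock i_min.
have pblock_i : finset.pblock C i = finset.pblock C s.
  apply/eqP; rewrite eq_sym.
  by rewrite eq_pblock ?mem_cover_partition ?trivIset_partition.
apply/mapP; exists i; last by rewrite pblock_i.
rewrite mem_filter mem_enum andbT pblock_i.
by apply/forall_inP => j /i_min.
Qed.

Lemma uniq_blocks : uniq (blocks C).
Proof.
rewrite map_inj_in_uniq; first exact/filter_uniq/(enum_uniq 'I_n).
move=> i j; rewrite !mem_filter => /andP[/forall_inP i_min _] /andP[/forall_inP j_min _].
move=> pblock_ij.
have j_in_i : j \in finset.pblock C i by rewrite pblock_ij mem_pblock mem_cover_partition.
have i_in_j : i \in finset.pblock C j by rewrite -pblock_ij mem_pblock mem_cover_partition.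
by apply/val_inj/eqP; rewrite eqn_leq i_min ?j_min.
Qed.

Lemma bidx_lt s : (bidx C s < nblocks C)%N.
Proof. by rewrite /bidx /nblocks index_mem pblock_in_blocks. Qed.

Lemma bidx_fiber b : (b < nblocks C)%N ->
  [set s | bidx C s == b] = nth finset.set0 (blocks C) b.
Proof.
move=> b_lt; apply/setP => s; rewrite inE mem_blockE ?mem_nth // /bidx.
apply/eqP/eqP => [<-|->]; first by rewrite nth_index ?pblock_in_blocks.
by rewrite index_uniq ?uniq_blocks.
Qed.

Lemma recombinator_nblocks0 (Xs : 'I_n -> finType) (R : realType)
    (om : Xspace Xs -> R) z :
  nblocks C = 0%N -> \sum_w om w = 1 -> recombinator C om z = om z.
Proof.
rewrite /nblocks /recombinator => /size0nil blocks0 om1.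
have noI (s : 'I_n) : False by have := pblock_in_blocks s; rewrite blocks0.
rewrite blocks0 big_nil -om1 (bigD1 z) //= big1 ?addr0 // => w /eqP[].
by apply/ffunP => s; case: (noI s).
Qed.

End Blocks.

Lemma eq_cyc k (j : 'I_k) m1 m2 : (m1 < k)%N -> (m2 < k)%N ->
  (cyc j m1 == cyc j m2) = (m1 == m2).
Proof. by move=> m1_lt m2_lt; rewrite -val_eqE /= eqn_modDr !modn_small. Qed.

Section ProductMeasure.
Variables (n : nat) (Xs : 'I_n -> finType) (R : realType).
Variable om : Xspace Xs -> R.

Lemma sum_prod_dirac_coord k (j : 'I_k) z : \sum_w om w = 1 ->
  \sum_(xs : {ffun 'I_k -> Xspace Xs}) (\prod_i om (xs i)) * dirac_vec R (xs j) z
  = om z.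
Proof.
move=> om1; pose f i x := om x * (if i == j then (z == x)%:R else 1).
transitivity (\sum_(xs : {ffun 'I_k -> Xspace Xs}) \prod_i f i (xs i)).
  apply: eq_bigr => xs _; rewrite big_split /=; congr (_ * _).
  by rewrite (bigD1 j) //= eqxx big1 ?mulr1 // => i /negbTE ->.
have others_one i : i != j -> \sum_x f i x = 1.
  move=> /negbTE i_neq; rewrite -[RHS]om1.
  by apply: eq_bigr => x _; rewrite /f i_neq mulr1.
rewrite -bigA_distr_bigA (bigD1 j) //= [X in _ * X]big1 // mulr1 (bigD1 z) //= big1 ?addr0.
  by rewrite /f !eqxx mulr1.
by move=> x /negbTE x_neq; rewrite /f eqxx eq_sym x_neq mulr0.
Qed.

Lemma sum_prod_dirac_patch k (p : 'I_n -> 'I_k) z :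
  \sum_(xs : {ffun 'I_k -> Xspace Xs})
      (\prod_i om (xs i)) * dirac_vec R [ffun s => xs (p s) s] z
  = \prod_i marginal_at [set s | p s == i] om z.
Proof.
pose agree i (x : Xspace Xs) := [forall s in [set s | p s == i], x s == z s].
pose f i x := om x * (agree i x)%:R.
transitivity (\sum_(xs : {ffun 'I_k -> Xspace Xs}) \prod_i f i (xs i)).
  apply: eq_bigr => xs _; rewrite big_split /=; congr (_ * _).
  have agreeE : (z == [ffun s => xs (p s) s]) = [forall i, agree i (xs i)].
    apply/eqP/forallP => [z_patch i | agree_all].
      by apply/forall_inP => s; rewrite inE z_patch ffunE => /eqP ->.
    apply/ffunP => s; rewrite ffunE; apply/eqP; rewrite eq_sym.
    by have /forall_inP := agree_all (p s); apply; rewrite inE.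
  rewrite /dirac_vec agreeE.
  have [/forallP agree_all | /forallPn[i /negbTE disagree]] :=
    boolP [forall i, agree i (xs i)].
    by rewrite big1 // => i _; rewrite agree_all.
  by rewrite (bigD1 i) //= disagree mul0r.
rewrite -bigA_distr_bigA; apply: eq_bigr => i _.
rewrite /marginal_at [RHS]big_mkcond; apply: eq_bigr => x _.
by rewrite /f /agree; case: ifP; rewrite ?mulr1 ?mulr0.
Qed.

Lemma prod_marginal_cyc C (j : 'I_(nblocks C)) z : is_partition C ->
  \prod_(i < nblocks C) marginal_at [set s | cyc j (bidx C s) == i] om z
  = recombinator C om z.
Proof.
move=> partC.
have cyc_inj : injective (fun b : 'I_(nblocks C) => cyc j b).
  by move=> a b /eqP; rewrite eq_cyc // => /eqP /val_inj.
rewrite (reindex_inj cyc_inj) /recombinator (big_nth finset.set0) big_mkord.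
apply: eq_bigr => b _; rewrite -bidx_fiber //; congr marginal_at.
by apply/setP => s; rewrite !inE eq_cyc ?bidx_lt.
Qed.

End ProductMeasure.

Section Fields.
Variables (n : nat) (Xs : 'I_n -> finType) (R : realType).

Lemma mass_action_partition_term C (c : R) (om : Xspace Xs -> R) z :
  is_partition C -> \sum_w om w = 1 ->
  \sum_(xs : {ffun 'I_(nblocks C) -> Xspace Xs})
      (c / (nblocks C)%:R) * (\prod_(i < nblocks C) om (xs i)) *
      \sum_(j < nblocks C)
        (dirac_vec R (recomb_point C xs j) z - dirac_vec R (xs j) z)
  = c * (recombinator C om z - om z).
Proof.
move=> partC om1.
under eq_bigr do rewrite mulr_sumr.
rewrite exchange_big /=.
under eq_bigr => j _.
  under eq_bigr do rewrite -mulrA mulrBr mulrBr.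
  rewrite sumrB -!mulr_sumr -mulrBr sum_prod_dirac_coord //.
  rewrite sum_prod_dirac_patch prod_marginal_cyc //.
  over.
rewrite sumr_const card_ord.
have [nblocks0|nblocks_gt0] := posnP (nblocks C).
  by rewrite recombinator_nblocks0 // subrr !mulr0 mul0rn.
by rewrite -[LHS]mulr_natr mulrAC divfK // pnatr_eq0 -lt0n.
Qed.

Lemma recomb_field_mass_action (rho : {set {set 'I_n}} -> R) (om : Xspace Xs -> R) :
  \sum_w om w = 1 -> recomb_field rho om =1 mass_action_field rho om.
Proof.
move=> om1 z; apply: eq_bigr => C partC.
by rewrite mass_action_partition_term.
Qed.

End Fields.

Theorem theorem3p3 (n : nat) (Xs : 'I_n -> finType) (R : realType)
    (rho : {set {set 'I_n}} -> R)
    (rho_ge0 : forall C, is_partition C -> 0 <= rho C)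
    (om : R -> Xspace Xs -> R)
    (om_prob : forall t : R, 0 <= t -> is_prob (om t)) :
  (forall t : R, 0 <= t -> forall z,
      is_derive t 1 (fun s : R => om s z) (recomb_field rho (om t) z)) <->
  (forall t : R, 0 <= t -> forall z,
      is_derive t 1 (fun s : R => om s z) (mass_action_field rho (om t) z)).
Proof.
have fieldsE (t : R) : 0 <= t -> recomb_field rho (om t) =1 mass_action_field rho (om t).
  by move=> t_ge0; have [_ om1] := om_prob t t_ge0; exact: recomb_field_mass_action.
by split=> deriv t t_ge0 z;
  [rewrite -(fieldsE t t_ge0) | rewrite (fieldsE t t_ge0)]; apply: deriv.
Qed.
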